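(* Let $a\ne b$ be letters and let $w=a^{n_1}b^{n_2}a$ or $w=ab^{n_2}a^{n_1}$, where $n_1\ge1$ and $n_2\in\{3,4\}$. Then every element of $\mathtt{BR}(w)$ is rich.
   Context: For a word $w=w_1\cdots w_n$, $w^R=w_n\cdots w_1$; $w$ is a palindrome if $w=w^R$; a factor of $w$ is a word $u$ with $w=puq$. A word $w$ is rich if the number of distinct nonempty palindromic factors of $w$ equals $|w|$. The block reversal of a nonempty word $w$ is $\mathtt{BR}(w)=\{B_t\cdots B_1 : w=B_1\cdots B_t,\ t\ge1,\ \text{each } B_i \text{ nonempty}\}$. *)

From mathcomp Require Import all_boot.
Set Implicit Arguments. Unset Strict Implicit. Unset Printing Implicit Defensive.

Section Words.
Variable T : eqType.

Definition palindrome (w : seq T) : bool := w == rev w.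

Definition factors (w : seq T) : seq (seq T) :=
  [seq take l (drop i w) | i <- iota 0 (size w).+1, l <- iota 0 (size w).+1].

Definition pal_factors (w : seq T) : seq (seq T) :=
  undup [seq u <- factors w | (u != [::]) && palindrome u].

Definition rich (w : seq T) : Prop := size (pal_factors w) = size w.

Definition in_BR (w v : seq T) : Prop :=
  exists Bs : seq (seq T),
    [/\ Bs != [::], all (fun B => B != [::]) Bs,
        w = flatten Bs & v = flatten (rev Bs)].
End Words.

From mathcomp Require Import all_boot zify.
Set Implicit Arguments. Unset Strict Implicit. Unset Printing Implicit Defensive.

(* Appending a letter to a word creates at most one new palindromic factor,
   its longest palindromic suffix; so a word is rich iff each letter, when
   appended, creates a new palindrome.  Cutting off the first block shows that
   every block reversal of [a^n b^m a] (write a = 1, b = 0) has the form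
   [1^K 0^m 1^S] or [0^p 1 0^q 1^K 0^j 1^S] with [K > 0].  Once the runs of ones
   are longer than the short head [x] in front of [1^K], every new letter creates
   one of the palindromes [1^r], [0^t], [0^t 1^K 0^t], [1^r 0^j 1^r] or
   [1^r 0^j 1^K 0^j 1^r], so richness for all [K] and [S] reduces to finitely
   many checks on the heads, done by computation for [m = 3, 4].  The words
   [a b^m a^n] are the reversals of [a^n b^m a]. *)

Section Palindromes.
Variable T : eqType.
Implicit Types (c : T) (u w y : seq T).

Definition richb w : bool := size (pal_factors w) == size w.

Lemma richP w : reflect (rich w) (richb w).
Proof. exact: eqP. Qed.

Lemma mem_factors u w : (u \in factors w) = infix u w.
Proof.
apply/allpairsP/infixP => [[[i l] /= [_ _ ->]]|[s [s' ->]]].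
  by exists (take i w), (drop l (drop i w)); rewrite !cat_take_drop.
exists (size s, size u); split; rewrite /= ?inE ?mem_iota ?size_cat; try lia.
by rewrite drop_size_cat // take_size_cat.
Qed.

Lemma mem_pal_factors u w :
  (u \in pal_factors w) = [&& u != [::], palindrome u & infix u w].
Proof. by rewrite mem_undup mem_filter mem_factors andbA. Qed.

Lemma pal_factors_uniq w : uniq (pal_factors w).
Proof. exact: undup_uniq. Qed.

Lemma palindrome_nseq n c : palindrome (nseq n c).
Proof. by rewrite /palindrome rev_nseq. Qed.

Lemma palindrome_wrap y u : palindrome u -> palindrome (y ++ u ++ rev y).
Proof. by move/eqP=> pu; rewrite /palindrome !rev_cat revK -pu catA. Qed.

(* [u1] is a suffix, hence by symmetry a prefix, of [u2]. *)
Lemma shorter_pal_suffix_infix u1 u2 w c :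
  palindrome u1 -> palindrome u2 -> suffix u1 (rcons w c) ->
  suffix u2 (rcons w c) -> size u1 < size u2 -> infix u1 w.
Proof.
move=> /eqP pal1 /eqP pal2 /suffixP [s1 e1] /suffixP [s2 e2] lt12.
have suf12 : suffix u1 u2.
  have sz : size s1 = size s2 + (size u2 - size u1).
    by move: (congr1 size e1); rewrite e2 !size_cat; lia.
  have -> : u1 = drop (size u2 - size u1) u2.
    transitivity (drop (size s1) (rcons w c)); first by rewrite e1 drop_size_cat.
    by rewrite e2 sz addnC -drop_drop drop_size_cat.
  exact: suffix_drop.
have /prefixP [t et] : prefix u1 u2 by rewrite pal1 pal2 prefix_rev.
case/lastP: t et => [|t x] et; first by rewrite et cats0 ltnn in lt12.
by move: e2; rewrite et -!rcons_cat => /rcons_inj [-> _]; apply: infix_infix.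
Qed.

Lemma size_pal_factors_rcons w c :
  size (pal_factors (rcons w c)) <= (size (pal_factors w)).+1.
Proof.
pose fresh := [seq u <- pal_factors (rcons w c) | ~~ infix u w].
have fresh_suffix u : u \in fresh ->
    [/\ palindrome u, suffix u (rcons w c) & ~~ infix u w].
  rewrite mem_filter mem_pal_factors infix_rconsl => /andP [nw /and3P [_ pu]].
  by rewrite (negbTE nw) orbF.
have size_fresh : size fresh <= 1.
  case fresh_def: fresh => [//|u s]; rewrite -fresh_def.
  have /fresh_suffix [pu su nu] : u \in fresh by rewrite fresh_def mem_head.
  apply: (@uniq_leq_size _ _ [:: u]) => [|v /fresh_suffix [pv sv nv]].
    exact/filter_uniq/pal_factors_uniq.
  rewrite inE; case: (ltngtP (size v) (size u)) => lt_vu.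
  - by rewrite (shorter_pal_suffix_infix pv pu sv su lt_vu) in nv.
  - by rewrite (shorter_pal_suffix_infix pu pv su sv lt_vu) in nu.
  - by move: sv su; rewrite !suffixE lt_vu => /eqP -> /eqP ->.
rewrite -addn1; apply: leq_trans (leq_add (leqnn _) size_fresh).
rewrite -size_cat; apply: uniq_leq_size (pal_factors_uniq _) _ => u u_new.
rewrite mem_cat; case uw: (infix u w).
- by move: u_new; rewrite !mem_pal_factors uw => /and3P [-> -> _].
- by rewrite mem_filter uw u_new orbT.
Qed.

Lemma size_pal_factors w : size (pal_factors w) <= size w.
Proof.
elim/last_ind: w => [|w c IH]; first by [].
by rewrite size_rcons (leq_trans (size_pal_factors_rcons w c)).
Qed.

Definition new_palindrome w c u : bool :=
  [&& u != [::], palindrome u, suffix u (rcons w c) & ~~ infix u w].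

Lemma rich_rcons w c u : rich w -> new_palindrome w c u -> rich (rcons w c).
Proof.
rewrite /rich => rich_w /and4P [nu pu su fresh_u].
apply/eqP; rewrite eqn_leq size_pal_factors size_rcons -rich_w /=.
have -> : (size (pal_factors w)).+1 = size (u :: pal_factors w) by [].
apply: uniq_leq_size => [|v].
  by rewrite /= pal_factors_uniq mem_pal_factors (negbTE fresh_u) !andbF.
rewrite inE => /predU1P [->|]; first by rewrite mem_pal_factors nu pu suffixW.
rewrite !mem_pal_factors => /and3P [-> -> vw].
exact: infix_trans vw (infix_rcons w c).
Qed.

Lemma rich_prefix w s : rich (w ++ s) -> rich w.
Proof.
elim/last_ind: s => [|s c IH]; first by rewrite cats0.
rewrite /rich -rcons_cat => rich_wsc; apply: IH; apply/eqP.
rewrite eqn_leq size_pal_factors -ltnS -(size_rcons _ c) -rich_wsc.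
exact: size_pal_factors_rcons.
Qed.

Lemma palindrome_rev u : palindrome (rev u) = palindrome u.
Proof. by rewrite /palindrome revK eq_sym. Qed.

Lemma rich_rev w : rich (rev w) <-> rich w.
Proof.
rewrite /rich size_rev; suff -> : size (pal_factors (rev w)) = size (pal_factors w) by [].
rewrite -(size_map rev); apply/perm_size/uniq_perm => [||u].
- by rewrite (map_inj_uniq (can_inj revK)) pal_factors_uniq.
- exact: pal_factors_uniq.
rewrite -[u in LHS]revK (mem_map (can_inj revK)) !mem_pal_factors.
by rewrite palindrome_rev infix_rev -!size_eq0 size_rev.
Qed.

End Palindromes.

Section LetterRenaming.
Variables (S T : eqType) (f : S -> T).
Hypothesis f_inj : injective f.

Lemma factors_map w : factors (map f w) = map (map f) (factors w).
Proof.
rewrite /factors map_allpairs size_map.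
by apply: eq_allpairs => i l; rewrite map_take map_drop.
Qed.

Lemma pal_factors_map w : pal_factors (map f w) = map (map f) (pal_factors w).
Proof.
rewrite /pal_factors -(undup_map_inj (inj_map f_inj)) factors_map filter_map.
congr (undup (map _ _)); apply: eq_filter => u /=.
by rewrite /palindrome -map_rev (inj_eq (inj_map f_inj)) -!size_eq0 size_map.
Qed.

Lemma rich_map w : rich (map f w) <-> rich w.
Proof. by rewrite /rich pal_factors_map !size_map. Qed.

End LetterRenaming.

Section Runs.
Variable T : eqType.
Implicit Types (c : T) (p y : seq T).

Lemma nseqSr n c : nseq n.+1 c = rcons (nseq n c) c.
Proof. by elim: n => //= n <-. Qed.

Lemma rcons_cat_nseq p n c : rcons (p ++ nseq n c) c = p ++ nseq n.+1 c.
Proof. by rewrite rcons_cat -nseqSr. Qed.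

Lemma rich_cat_nseq p c k : rich p ->
  (forall r, r < k -> exists u, new_palindrome (p ++ nseq r c) c u) ->
  rich (p ++ nseq k c).
Proof.
move=> rich_p; elim: k => [|k IH] fresh; first by rewrite cats0.
have [u new_u] := fresh k (ltnSn k).
rewrite -rcons_cat_nseq; apply: rich_rcons new_u; apply: IH => r lt_rk.
exact: fresh (ltnW lt_rk).
Qed.

Lemma rich_cat_long_run y c N : rich (y ++ nseq N c) ->
  ~~ infix (nseq N.+1 c) (y ++ nseq N c) -> forall n, rich (y ++ nseq n c).
Proof.
move=> rich_N fresh_N n; case: (leqP n N) => [le_nN|lt_Nn].
  by move: rich_N; rewrite -(subnKC le_nN) nseqD catA => /rich_prefix.
suff long d : rich (y ++ nseq (N + d) c) /\
              ~~ infix (nseq (N + d).+1 c) (y ++ nseq (N + d) c).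
  by rewrite -(subnKC (ltnW lt_Nn)); case: (long (n - N)).
elim: d => [|d [rich_d fresh_d]]; first by rewrite addn0.
rewrite addnS -rcons_cat_nseq; split.
  apply: (rich_rcons (u := nseq (N + d).+1 c) rich_d).
  by rewrite /new_palindrome palindrome_nseq fresh_d rcons_cat_nseq suffix_suffix.
rewrite infix_rconsl nseqSr suffix_rcons eqxx negb_or; apply/andP; split.
  by apply: contra fresh_d; apply: suffixW.
by apply: contra fresh_d; apply/infix_trans/infix_rcons.
Qed.

End Runs.

Section BlockReversal.
Variable T : eqType.
Implicit Types (c d : T) (s v w : seq T).

Lemma in_BR_cut w v : in_BR w v -> v = w \/
  exists k v', [/\ 0 < k < size w, in_BR (drop k w) v' & v = v' ++ take k w].
Proof.
case=> Bs [+ + -> ->]; case: Bs => [//|B [|B' Bs]] _ /andP [nB]; first by left.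
case/andP=> nB' nBs; right; exists (size B), (flatten (rev (B' :: Bs))).
have -> : flatten [:: B, B' & Bs] = B ++ flatten (B' :: Bs) by [].
split.
- rewrite size_cat lt0n size_eq0 nB -{1}[size B]addn0 ltn_add2l /=.
  by rewrite size_cat addn_gt0 lt0n size_eq0 nB'.
- by rewrite drop_size_cat //; exists (B' :: Bs); split=> //=; rewrite nB'.
- by rewrite take_size_cat // rev_cons flatten_rcons.
Qed.

Lemma in_BR_rev w v : in_BR w v -> in_BR (rev w) (rev v).
Proof.
case=> Bs [nBs allB -> ->]; exists (rev (map rev Bs)); split.
- by rewrite -size_eq0 size_rev size_map size_eq0.
- rewrite all_rev all_map; apply: sub_all allB => B /=.
  by rewrite -!size_eq0 size_rev.
- exact: rev_flatten.
- by rewrite rev_flatten map_rev revK.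
Qed.

Lemma take_nseq_cat k n c s : k <= n -> take k (nseq n c ++ s) = nseq k c.
Proof.
by move=> le_kn; rewrite -(subnKC le_kn) nseqD -catA take_size_cat ?size_nseq.
Qed.

Lemma drop_nseq_cat k n c s : k <= n ->
  drop k (nseq n c ++ s) = nseq (n - k) c ++ s.
Proof.
by move=> le_kn; rewrite -{1}(subnKC le_kn) nseqD -catA drop_size_cat ?size_nseq.
Qed.

Lemma in_BR_rcons_nseq e c d v : in_BR (nseq e c ++ [:: d]) v ->
  exists a b, a + b = e /\ v = nseq a c ++ d :: nseq b c.
Proof.
elim/ltn_ind: e v => e IH v /in_BR_cut [->|[k [v' [/andP [k0 ke] BR_v' ->]]]].
  by exists e, 0; rewrite addn0.
rewrite size_cat size_nseq addn1 ltnS in ke.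
rewrite drop_nseq_cat // in BR_v'; rewrite take_nseq_cat //.
have [a [b [eab ->]]] := IH (e - k) ltac:(lia) v' BR_v'.
by exists a, (b + k); split; [lia | rewrite -catA nseqD].
Qed.

Lemma in_BR_nseq_nseq_rcons n m c d v : 0 < n ->
  in_BR (nseq n c ++ nseq m d ++ [:: c]) v ->
  exists K S, 0 < K /\
    (v = nseq K c ++ nseq m d ++ nseq S.+1 c \/
     exists a b j, a + b + j = m /\
       v = nseq a d ++ c :: nseq b d ++ nseq K c ++ nseq j d ++ nseq S c).
Proof.
elim/ltn_ind: n v => n IH v n0 /in_BR_cut [->|[k [v' [/andP [k0 kw] BR_v' ->]]]].
  by exists n, 0; split=> //; left.
case: (ltnP k n) => [lt_kn|le_nk].
  have le_kn := ltnW lt_kn.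
  rewrite drop_nseq_cat // in BR_v'; rewrite take_nseq_cat //.
  have [K [S [K0 shape_v']]] := IH (n - k) ltac:(lia) v' ltac:(lia) BR_v'.
  exists K, (S + k); split=> //; case: shape_v' => [->|[a [b [j [eabj ->]]]]].
    by left; rewrite -!catA -nseqD addSn.
  by right; exists a, b, j; rewrite -!catA /= -!catA -nseqD.
have [k' def_k] : exists k', k = n + k' by exists (k - n); rewrite subnKC.
rewrite def_k !size_cat !size_nseq addn1 ltn_add2l ltnS in kw.
rewrite def_k addnC -drop_drop drop_size_cat ?size_nseq // drop_nseq_cat // in BR_v'.
rewrite def_k takeD take_size_cat ?size_nseq // drop_size_cat ?size_nseq //.
have [a [b [eab ->]]] := in_BR_rcons_nseq BR_v'.
exists n, 0; split=> //; right; exists a, b, k'; split; first lia.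
by rewrite take_nseq_cat // /= cats0 -!catA.
Qed.

End BlockReversal.

Section BlockReversalMap.
Variables (S T : eqType) (f : S -> T).

Lemma in_BR_map w v : in_BR (map f w) v -> exists2 vs, v = map f vs & in_BR w vs.
Proof.
case=> Bs [nBs allB ew ->]; set Cs := reshape (shape Bs) w.
have eCs : map (map f) Cs = Bs by rewrite map_reshape ew flattenK.
exists (flatten (rev Cs)); first by rewrite map_flatten map_rev eCs.
exists Cs; split=> //.
- by move: nBs; rewrite -eCs -!size_eq0 size_map.
- move: allB; rewrite -eCs all_map; apply: sub_all => B /=.
  by rewrite -!size_eq0 size_map.
- by rewrite reshapeKr // -(size_map f) ew size_flatten.
Qed.

End BlockReversalMap.

Lemma infix_nthP (T : eqType) (x0 : T) (u z : seq T) :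
  reflect (exists2 i, i + size u <= size z &
             forall t, t < size u -> nth x0 z (i + t) = nth x0 u t)
          (infix u z).
Proof.
apply: (iffP (@infixP _ u z)) => [[s [s' ->]]|[i fit at_i]].
  exists (size s); first by rewrite !size_cat; lia.
  by move=> t lt_tu; rewrite nth_cat ltnNge leq_addr /= addKn nth_cat lt_tu.
have eu : take (size u) (drop i z) = u.
  apply: (@eq_from_nth _ x0) => [|t]; first by rewrite size_takel // size_drop; lia.
  by rewrite size_takel ?size_drop; [move=> lt_tu; rewrite nth_take // nth_drop at_i | lia].
by exists (take i z), (drop (size u) (drop i z)); rewrite -{1}eu !cat_take_drop.
Qed.

Section BinaryWords.
Implicit Types (x : seq bool).

(* [infix_nthP] restated at type [bool]: instantiated directly it produces
   [size] terms at type [Equality.sort bool], which [lia] does not identify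
   with the [size x] of the statements below. *)
Let infix_nth_bool (u z : seq bool) :
  reflect (exists2 i, i + size u <= size z &
             forall t, t < size u -> nth false z (i + t) = nth false u t)
          (infix u z) := infix_nthP false u z.

Ltac nth_lia :=
  rewrite ?nth_cat ?size_cat ?size_nseq ?nth_nseq /=; repeat case: ifP => ?; lia.

Lemma nth_head_last x s : 0 < size x -> ~~ last false x ->
  nth false (x ++ s) (size x - 1) = false.
Proof.
by move=> x0 end0; rewrite nth_cat ifT ?subn1 ?nth_last ?(negbTE end0) //; lia.
Qed.

(* Such a run of ones would cover the last letter of [x]. *)
Lemma notin_ones_head x : ~~ last false x ->
  ~~ infix (nseq (size x).+1 true) (x ++ nseq (size x) true).
Proof.
move=> end0; apply/negP => /infix_nth_bool [i].
rewrite size_cat !size_nseq => fit /(_ (size x - 1 - i) ltac:(lia)).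
by rewrite subnKC ?nth_head_last //; [nth_lia | lia | lia].
Qed.

(* Such a run of ones would cover the last letter of [x] or a zero. *)
Lemma notin_long_ones x K j : size x < K -> 0 < j -> ~~ last false x ->
  ~~ infix (nseq K.+1 true) ((x ++ nseq K true ++ nseq j false) ++ nseq K true).
Proof.
move=> lt_xK j0 end0; apply/negP => /infix_nth_bool [i].
rewrite !size_cat !size_nseq -!catA => fit at_i.
case: (ltnP i (size x)) => [lt_ix|le_xi].
  have := at_i (size x - 1 - i) ltac:(lia).
  by rewrite subnKC ?nth_head_last //; [nth_lia | lia | lia].
case: (leqP i (size x + K)) => ?.
  by have := at_i (size x + K - i) ltac:(lia); nth_lia.
by have := at_i 0 ltac:(lia); nth_lia.
Qed.

(* An earlier occurrence would put the final zeros of the palindrome on the block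
   [1^K], the only run of [K] ones. *)
Lemma new_pal_zeros_around x K t : size x < K -> suffix (nseq t.+1 false) x ->
  new_palindrome ((x ++ nseq K true) ++ nseq t false) false
                 (nseq t.+1 false ++ nseq K true ++ nseq t.+1 false).
Proof.
move=> lt_xK /suffixP [x' ex]; apply/and4P; split=> //.
- by have := palindrome_wrap (nseq t.+1 false) (palindrome_nseq K true); rewrite rev_nseq.
- by rewrite rcons_cat_nseq ex -!catA suffix_suffix.
apply/negP => /infix_nth_bool [i]; rewrite !size_cat !size_nseq => fit at_i.
by have := at_i (t.+1 + K) ltac:(lia); nth_lia.
Qed.

Lemma new_pal_zeros x K t : 0 < K -> ~~ infix (nseq t.+1 false) x ->
  new_palindrome ((x ++ nseq K true) ++ nseq t false) false (nseq t.+1 false).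
Proof.
move=> K0 notin_x; apply/and4P; split=> //.
- exact: palindrome_nseq.
- by rewrite rcons_cat_nseq suffix_suffix.
apply/negP => /infix_nth_bool [i]; rewrite !size_cat !size_nseq => fit at_i.
case: (leqP (i + t.+1) (size x)) => [inside|cross].
  move/negP: notin_x; apply; apply/infix_nth_bool; exists i; rewrite size_nseq //.
  by move=> s lt_s; rewrite -at_i // -catA nth_cat ifT //; lia.
case: (leqP (size x) i) => ?.
  by have := at_i 0 ltac:(lia); nth_lia.
by have := at_i (size x - i) ltac:(lia); nth_lia.
Qed.

(* By length an earlier occurrence would start inside [x] and put its second
   [0^j] on the block [1^K]. *)
Lemma new_pal_ones_around_twice x K j r :
  size x < K -> 0 < j -> suffix (nseq r.+1 true ++ nseq j false) x ->
  new_palindrome ((x ++ nseq K true ++ nseq j false) ++ nseq r true) true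
    (nseq r.+1 true ++ nseq j false ++ nseq K true ++ nseq j false ++ nseq r.+1 true).
Proof.
move=> lt_xK j0 /suffixP [x' ex]; apply/and4P; split=> //.
- have := palindrome_wrap (nseq r.+1 true ++ nseq j false) (palindrome_nseq K true).
  by rewrite rev_cat !rev_nseq -!catA.
- by rewrite rcons_cat_nseq ex -!catA suffix_suffix.
apply/negP => /infix_nth_bool [i]; rewrite !size_cat !size_nseq => fit at_i.
by have := at_i (r.+1 + j + K) ltac:(lia); nth_lia.
Qed.

(* An occurrence reaching beyond [x 1^(r+1)] puts its zeros on the block [1^K]
   or its last ones on the block [0^j]. *)
Lemma new_pal_ones_around x K j r : r < K -> 0 < j ->
  ~~ infix (nseq r.+1 true ++ nseq j false ++ nseq r.+1 true) (x ++ nseq r.+1 true) ->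
  new_palindrome ((x ++ nseq K true ++ nseq j false) ++ nseq r true) true
                 (nseq r.+1 true ++ nseq j false ++ nseq r.+1 true).
Proof.
move=> lt_rK j0 notin_xr; apply/and4P; split=> //.
- by have := palindrome_wrap (nseq r.+1 true) (palindrome_nseq j false); rewrite rev_nseq.
- by rewrite rcons_cat_nseq -(subnK lt_rK) nseqD -!catA; apply/suffix_catr/suffix_suffix.
apply: contra notin_xr => /infix_nth_bool [i]; rewrite !size_cat !size_nseq => fit at_i.
case: (leqP (i + (r.+1 + (j + r.+1))) (size x + r.+1)) => [inside|cross].
  apply/infix_nth_bool; exists i; rewrite ?size_cat ?size_nseq // => s lt_s.
  by rewrite -at_i ?size_cat ?size_nseq //; nth_lia.
exfalso; case: (ltnP (i + r + j) (size x + K)) => ?.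
  by have := at_i (r + j) ltac:(lia); nth_lia.
by have := at_i (r + j).+1 ltac:(lia); nth_lia.
Qed.

Lemma rich_head_ones_zeros x K j : size x < K ->
  (forall t, t < j -> suffix (nseq t.+1 false) x || ~~ infix (nseq t.+1 false) x) ->
  rich (x ++ nseq K true) -> rich ((x ++ nseq K true) ++ nseq j false).
Proof.
move=> lt_xK zeros_ok rich_xK; apply: rich_cat_nseq rich_xK _ => t lt_tj.
case/orP: (zeros_ok t lt_tj) => [suf|notin].
  by eexists; apply: new_pal_zeros_around.
by eexists; apply: new_pal_zeros; first lia.
Qed.

Lemma rich_head_ones_zeros_ones x K j : size x < K -> 0 < j -> ~~ last false x ->
  (forall r, r < size x -> suffix (nseq r.+1 true ++ nseq j false) x ||
     ~~ infix (nseq r.+1 true ++ nseq j false ++ nseq r.+1 true) (x ++ nseq r.+1 true)) ->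
  rich (x ++ nseq K true ++ nseq j false) ->
  forall S, rich ((x ++ nseq K true ++ nseq j false) ++ nseq S true).
Proof.
move=> lt_xK j0 end0 ones_ok rich_y.
apply: rich_cat_long_run (notin_long_ones lt_xK j0 end0).
apply: rich_cat_nseq rich_y _ => r lt_rK.
case: (ltnP r (size x)) => [lt_rx|le_xr].
  case/orP: (ones_ok r lt_rx) => [suf|notin].
    by eexists; apply: new_pal_ones_around_twice.
  by eexists; apply: new_pal_ones_around.
eexists; apply: new_pal_ones_around => //; apply/negP => /size_infix.
by rewrite /= !size_cat !size_nseq; lia.
Qed.

(* A decidable sufficient condition for every [x 1^K 0^j 1^S] with [K > 0] to be
   rich: runs of ones longer than [x] create new palindromes uniformly, so only
   runs up to [size x] need checking. *)
Definition head_cert x j : bool :=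
  [&& ~~ last false x, richb (x ++ nseq (size x) true),
      all (fun t => suffix (nseq t.+1 false) x || ~~ infix (nseq t.+1 false) x)
          (iota 0 j),
      all (fun r => suffix (nseq r.+1 true ++ nseq j false) x ||
             ~~ infix (nseq r.+1 true ++ nseq j false ++ nseq r.+1 true)
                      (x ++ nseq r.+1 true))
          (iota 0 (size x)) &
      (j == 0) || all (fun K =>
        let y := x ++ nseq K.+1 true ++ nseq j false ++ nseq (size x) true in
        richb y && ~~ infix (nseq (size x).+1 true) y) (iota 0 (size x))].

Lemma rich_head_pattern x j K S : head_cert x j -> 0 < K ->
  rich (x ++ nseq K true ++ nseq j false ++ nseq S true).
Proof.
case/and5P=> end0 /richP rich_x /allP zeros_ok /allP ones_ok short_ok.
have rich_ones := rich_cat_long_run rich_x (notin_ones_head end0).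
case: K => // K _; have [->|j0] := posnP j.
  by rewrite cat0s -nseqD; apply: rich_ones.
rewrite (catA (nseq K.+1 true)) catA; case: (ltnP K (size x)) => [lt_Kx|le_xK].
  move: short_ok; rewrite eqn0Ngt j0 => /allP /(_ K); rewrite mem_iota.
  case/(_ _)/andP => [|/richP rich_y notin_y]; first lia.
  by apply: (rich_cat_long_run (N := size x)); rewrite -!catA.
apply: rich_head_ones_zeros_ones => // [r lt_rx|].
  by apply: ones_ok; rewrite mem_iota; lia.
rewrite catA; apply: rich_head_ones_zeros => // t lt_tj.
by apply: zeros_ok; rewrite mem_iota; lia.
Qed.

(* The head [0^a 1 0^b] of a block reversal; for [b = 0] its 1 is counted in
   the run of ones that follows. *)
Definition head_word a b : seq bool :=
  if b is 0 then nseq a false else nseq a false ++ true :: nseq b false.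

Definition heads_certified m : bool :=
  all (fun a => all (fun b => head_cert (head_word a b) (m - (a + b)))
                    (iota 0 (m - a).+1))
      (iota 0 m.+1).

Lemma rich_BR_binary m n v : heads_certified m -> 0 < n ->
  in_BR (nseq n true ++ nseq m false ++ [:: true]) v -> rich v.
Proof.
move=> cert n0 /(in_BR_nseq_nseq_rcons n0) [K [S [K0 shape_v]]].
have head_ok a b : a + b <= m -> head_cert (head_word a b) (m - (a + b)).
  move=> le_abm; move/allP/(_ a): cert; rewrite mem_iota => /(_ _)/allP/(_ b).
  by rewrite mem_iota; apply; lia.
case: shape_v => [->|[a [b [j [eabj ->]]]]].
  by have := rich_head_pattern S.+1 (head_ok 0 0 isT) K0; rewrite addn0 subn0.
have {eabj}[le_abm ->] : a + b <= m /\ j = m - (a + b) by lia.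
case: b le_abm => [|b] le_abm.
  exact: rich_head_pattern S (head_ok a 0 le_abm) (ltn0Sn K).
by have := rich_head_pattern S (head_ok a b.+1 le_abm) K0; rewrite -catA.
Qed.

End BinaryWords.

Lemma rich_BR_two_letters (T : eqType) (a b : T) m n v :
  a != b -> heads_certified m -> 0 < n ->
  in_BR (nseq n a ++ nseq m b ++ [:: a]) v -> rich v.
Proof.
move=> neq_ab cert n0; pose f (c : bool) := if c then a else b.
have f_inj : injective f by case=> [] [] //= eab; move: neq_ab; rewrite eab eqxx.
have -> : nseq n a ++ nseq m b ++ [:: a] =
          map f (nseq n true ++ nseq m false ++ [:: true]) by rewrite !map_cat !map_nseq.
by case/in_BR_map=> vs -> /(rich_BR_binary cert n0) /(rich_map f_inj).
Qed.

Theorem mainTheorem13 (T : eqType) (a b : T) (n1 n2 : nat) (w v : seq T) :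
  a != b -> 1 <= n1 -> (n2 = 3 \/ n2 = 4) ->
  (w = nseq n1 a ++ nseq n2 b ++ [:: a] \/ w = [:: a] ++ nseq n2 b ++ nseq n1 a) ->
  in_BR w v -> rich v.
Proof.
move=> neq_ab n1_gt0 n2_34 w_shape BR_wv.
have cert : heads_certified n2 by case: n2_34 => ->; vm_compute.
case: w_shape => w_def; subst w; first exact: rich_BR_two_letters neq_ab cert n1_gt0 BR_wv.
apply/rich_rev; apply: (rich_BR_two_letters neq_ab cert n1_gt0).
by move/in_BR_rev: BR_wv; rewrite !rev_cat !rev_nseq -catA.
Qed.
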